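(* In the multi-parameter setting described in the context, suppose $p_j(\theta)>0$ for all $j$ and all $\theta$. Then $H(\theta)=C_\Upsilon(\theta)$ holds if and only if the channel is quasi-classical, i.e. the eigenvectors $|w_k\rangle$ of the output state do not depend on $\theta$.
   Context: A multi-parameter quantum channel on density matrices on $\mathbb{C}^d$ is $\rho_0\mapsto\sum_kE_k(\theta)\rho_0E_k(\theta)^\dagger$ with $\theta\in\mathbb{R}^m$, Kraus operators differentiable in $\theta$, $\sum_kE_k^\dagger E_k=I$. The input is a fixed pure state $\rho_0=|\psi_0\rangle\langle\psi_0|$. Canonical Kraus operators $\{\Upsilon_k(\theta)\}_{k=1}^d$: a differentiable Kraus representation of the same channel with $\mathrm{tr}\{\Upsilon_k\rho_0\Upsilon_j^\dagger\}=\delta_{jk}p_k(\theta)$; the output is $\rho_{out}(\theta)=\sum_kp_k|w_k\rangle\langle w_k|$ with $|w_k\rangle=p_k^{-1/2}\Upsilon_k|\psi_0\rangle$ an orthonormal basis differentiable in $\theta$. Write $X^{(j)}=\partial X/\partial\theta^j$. $C_\Upsilon(\theta)_{jk}=4\sum_l\mathrm{Re}\,\mathrm{tr}\{\Upsilon_l^{(j)}\rho_0\Upsilon_l^{(k)\dagger}\}$; $H(\theta)_{jk}=\mathrm{Re}\,\mathrm{tr}\{\lambda^{(j)}\rho_{out}\lambda^{(k)}\}$ is the SLD quantum information matrix, with $\lambda^{(j)}$ a self-adjoint solution of $\partial\rho_{out}/\partial\theta^j=\frac12(\rho_{out}\lambda^{(j)}+\lambda^{(j)}\rho_{out})$. 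*)

From HB Require Import structures.
From mathcomp Require Import all_boot all_order all_algebra.
From mathcomp Require Import all_classical all_reals all_analysis.
From mathcomp Require Import complex.
Set Implicit Arguments. Unset Strict Implicit. Unset Printing Implicit Defensive.
Import Order.TTheory GRing.Theory Num.Theory.
Import numFieldNormedType.Exports.
Local Open Scope ring_scope.
Local Open Scope complex_scope.

Section Defs.
Variables (R : realType) (m d : nat).

Definition adjmx (p q : nat) (A : 'M[R[i]]_(p, q)) : 'M[R[i]]_(q, p) :=
  (map_mx (@conjc R) A)^T.

Definition ej (j : 'I_m) : 'rV[R]_m := delta_mx 0 j.

Definition mx_differentiable (p q : nat) (F : 'rV[R]_m -> 'M[R[i]]_(p, q)) :=
  forall (theta : 'rV[R]_m) (a : 'I_p) (b : 'I_q),
    differentiable (fun t => complex.Re (F t a b)) theta /\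
    differentiable (fun t => complex.Im (F t a b)) theta.

Definition pder (p q : nat) (F : 'rV[R]_m -> 'M[R[i]]_(p, q)) (j : 'I_m)
    (theta : 'rV[R]_m) : 'M[R[i]]_(p, q) :=
  \matrix_(a, b) ('D_(ej j) (fun t => complex.Re (F t a b)) theta
                  +i* 'D_(ej j) (fun t => complex.Im (F t a b)) theta).


Definition pure_state (psi0 : 'cV[R[i]]_d) : 'M[R[i]]_d := psi0 *m adjmx psi0.

Definition pk (Ups : 'I_d -> 'rV[R]_m -> 'M[R[i]]_d) (psi0 : 'cV[R[i]]_d)
    (k : 'I_d) (theta : 'rV[R]_m) : R :=
  complex.Re (\tr (Ups k theta *m pure_state psi0 *m adjmx (Ups k theta))).

Definition wk (Ups : 'I_d -> 'rV[R]_m -> 'M[R[i]]_d) (psi0 : 'cV[R[i]]_d)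
    (k : 'I_d) (theta : 'rV[R]_m) : 'cV[R[i]]_d :=
  ((Num.sqrt (pk Ups psi0 k theta))^-1)%:C *: (Ups k theta *m psi0).

Definition rho_out (Ups : 'I_d -> 'rV[R]_m -> 'M[R[i]]_d) (psi0 : 'cV[R[i]]_d)
    (theta : 'rV[R]_m) : 'M[R[i]]_d :=
  \sum_(k < d) Ups k theta *m pure_state psi0 *m adjmx (Ups k theta).

Definition C_Ups (Ups : 'I_d -> 'rV[R]_m -> 'M[R[i]]_d) (psi0 : 'cV[R[i]]_d)
    (theta : 'rV[R]_m) : 'M[R]_m :=
  \matrix_(j, k) (4 * \sum_(l < d) complex.Re
     (\tr (pder (Ups l) j theta *m pure_state psi0 *m adjmx (pder (Ups l) k theta)))).

Definition is_SLD (Ups : 'I_d -> 'rV[R]_m -> 'M[R[i]]_d) (psi0 : 'cV[R[i]]_d)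
    (lam : 'I_m -> 'rV[R]_m -> 'M[R[i]]_d) :=
  forall (j : 'I_m) (theta : 'rV[R]_m),
    adjmx (lam j theta) = lam j theta /\
    pder (rho_out Ups psi0) j theta =
      (2%:R^-1 : R[i]) *: (rho_out Ups psi0 theta *m lam j theta
                           + lam j theta *m rho_out Ups psi0 theta).

Definition H_SLD (Ups : 'I_d -> 'rV[R]_m -> 'M[R[i]]_d) (psi0 : 'cV[R[i]]_d)
    (lam : 'I_m -> 'rV[R]_m -> 'M[R[i]]_d) (theta : 'rV[R]_m) : 'M[R]_m :=
  \matrix_(j, k) complex.Re (\tr (lam j theta *m rho_out Ups psi0 theta *m lam k theta)).

Definition quasi_classical (Ups : 'I_d -> 'rV[R]_m -> 'M[R[i]]_d)
    (psi0 : 'cV[R[i]]_d) :=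
  forall (k : 'I_d) (theta theta' : 'rV[R]_m),
    wk Ups psi0 k theta = wk Ups psi0 k theta'.

End Defs.

(* Let V(θ) be the matrix whose columns are the vectors v_b = Υ_b ψ0, so that
   ρ_out = V V†, V†V = diag(p) and C_jk = 4 Re tr(∂_j V ∂_k V†).  Write V = W S
   with W unitary and S = diag(√p), and put Y = W† ∂_j V, M = W† λ^(j) W.  The SLD
   equation determines M entrywise from Y, and differentiating V†V = diag(p)
   relates Y_ab to Y_ba; together they make C_jj − H_jj a sum of the nonnegative
   terms 16 s_a² s_b² |Y_ab|² / (s_a² + s_b²)² (a ≠ b) and 4 (Im Y_aa)².  So H = C
   forces Y, hence V⁻¹ ∂_j V, to be real diagonal; conversely for such ∂_j V the
   matrix M is diagonal too and H = C by direct computation.  Finally ∂_j v_b is a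
   real multiple of v_b for all j exactly when w_b = v_b / √p_b has vanishing
   partial derivatives, i.e. is constant. *)

From HB Require Import structures.
From mathcomp Require Import all_boot all_order all_algebra.
From mathcomp Require Import all_classical all_reals all_analysis.
From mathcomp Require Import complex.
From mathcomp Require Import ring lra.
Import Order.TTheory GRing.Theory Num.Theory.
Import numFieldNormedType.Exports.
Local Open Scope ring_scope.
Local Open Scope complex_scope.
Set Implicit Arguments. Unset Strict Implicit.

Local Notation cRe := complex.Re.
Local Notation cIm := complex.Im.


Section ComplexParts.
Variable R : realType.

Lemma cReD (x y : R[i]) : cRe (x + y) = cRe x + cRe y.
Proof. by case: x; case: y. Qed.
Lemma cImD (x y : R[i]) : cIm (x + y) = cIm x + cIm y.
Proof. by case: x; case: y. Qed.
Lemma cReM (x y : R[i]) : cRe (x * y) = cRe x * cRe y - cIm x * cIm y.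
Proof. by case: x; case: y. Qed.
Lemma cImM (x y : R[i]) : cIm (x * y) = cRe x * cIm y + cIm x * cRe y.
Proof. by case: x; case: y. Qed.
Lemma cReJ (x : R[i]) : cRe x^* = cRe x.
Proof. by case: x. Qed.
Lemma cImJ (x : R[i]) : cIm x^* = - cIm x.
Proof. by case: x. Qed.

Lemma cRe_sum I (r : seq I) (P : pred I) (F : I -> R[i]) :
  cRe (\sum_(i <- r | P i) F i) = \sum_(i <- r | P i) cRe (F i).
Proof. exact: (big_morph _ cReD). Qed.

End ComplexParts.

Section Scalar.
Variable R : realType.
Implicit Types (sa sb : R) (y z mu : R[i]).

Definition cnorm2 (z : R[i]) : R := cRe z ^+ 2 + cIm z ^+ 2.

Lemma cnorm2_ge0 z : 0 <= cnorm2 z.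
Proof. by rewrite addr_ge0 ?sqr_ge0. Qed.

Lemma cnorm2_eq0 z : cnorm2 z = 0 -> z = 0.
Proof.
case: z => a b; rewrite /cnorm2 /= => h.
have a0 : a = 0 by nra.
have b0 : b = 0 by nra.
by rewrite a0 b0.
Qed.

Lemma complex2 : (2 : R[i]) = (2 : R)%:C.
Proof. by rewrite rmorph_nat. Qed.

(* [y], [z], [mu] stand for the entries Y_ab, Y_ba, M_ab: the first equation is
   the (a, b) entry of the derivative of the diagonal matrix V†V, the second the
   SLD equation. *)
Lemma fisher_gap_offdiag sa sb y z mu : 0 < sa -> 0 < sb ->
  z^* * sb%:C + sa%:C * y = 0 ->
  (sa ^+ 2 + sb ^+ 2)%:C * mu = 2 * (y * sb%:C + sa%:C * z^*) ->
  4 * cnorm2 y - sb ^+ 2 * cnorm2 mu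
  = 16 * sa ^+ 2 * sb ^+ 2 * cnorm2 y / (sa ^+ 2 + sb ^+ 2) ^+ 2.
Proof.
move=> sa0 sb0; case: y => y1 y2; case: z => z1 z2; case: mu => m1 m2.
rewrite complex2 /cnorm2.
move/eqP; rewrite eq_complex /= => /andP[/eqP O1 /eqP O2].
move/eqP; rewrite eq_complex /= => /andP[/eqP E1 /eqP E2].
have sb_neq0 : sb != 0 by rewrite gt_eqF.
have Q_neq0 : sa ^+ 2 + sb ^+ 2 != 0 by rewrite gt_eqF // addr_gt0 // exprn_gt0.
have hz1 : z1 = - (sa * y1) / sb by apply: (mulIf sb_neq0); rewrite divfK //; lra.
have hz2 : z2 = (sa * y2) / sb by apply: (mulIf sb_neq0); rewrite divfK //; lra.
have hm1 : m1 = 2 * (y1 * sb + sa * z1) / (sa ^+ 2 + sb ^+ 2).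
  by apply: (mulIf Q_neq0); rewrite divfK //; lra.
have hm2 : m2 = 2 * (y2 * sb - sa * z2) / (sa ^+ 2 + sb ^+ 2).
  by apply: (mulIf Q_neq0); rewrite divfK //; lra.
rewrite /= hm1 hm2 hz1 hz2.
by field; rewrite sb_neq0 Q_neq0.
Qed.

Lemma fisher_gap_diag s y mu : 0 < s ->
  (s ^+ 2 + s ^+ 2)%:C * mu = 2 * (y * s%:C + s%:C * y^*) ->
  4 * cnorm2 y - s ^+ 2 * cnorm2 mu = 4 * cIm y ^+ 2.
Proof.
move=> s0; case: y => y1 y2; case: mu => m1 m2; rewrite complex2 /cnorm2.
move/eqP; rewrite eq_complex /= => /andP[/eqP E1 /eqP E2].
have s_neq0 : s != 0 by rewrite gt_eqF.
have hm1 : m1 = 2 * y1 / s.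
  by apply: (mulIf s_neq0); rewrite divfK //; apply: (mulfI s_neq0); nra.
have hm2 : m2 = 0 by apply: (mulIf (mulf_neq0 s_neq0 s_neq0)); nra.
by rewrite /= hm1 hm2; field.
Qed.

End Scalar.

Section Adjoint.
Variable R : realType.
Local Notation C := R[i].

Lemma adjmxE p q (A : 'M[C]_(p, q)) a b : adjmx A a b = (A b a)^*.
Proof. by rewrite !mxE. Qed.

Lemma adjmxM p q r (A : 'M[C]_(p, q)) (B : 'M[C]_(q, r)) :
  adjmx (A *m B) = adjmx B *m adjmx A.
Proof. by rewrite /adjmx map_mxM trmx_mul. Qed.

Lemma adjmxK p q (A : 'M[C]_(p, q)) : adjmx (adjmx A) = A.
Proof. by apply/matrixP => a b; rewrite !mxE conjcK. Qed.

Lemma conjc_realR (x : R) : (x%:C)^* = x%:C :> C.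
Proof. by rewrite /= oppr0. Qed.

Lemma conjc0R : (0 : C)^* = 0.
Proof. by rewrite -(rmorph0 (real_complex R)) conjc_realR. Qed.

Definition rdiag n (k : 'I_n -> R) : 'M[C]_n := diag_mx (\row_a (k a)%:C).

Lemma rdiagE n (k : 'I_n -> R) a b : rdiag k a b = (k a)%:C *+ (a == b).
Proof. by rewrite !mxE. Qed.

Lemma adjmx_rdiag n (k : 'I_n -> R) : adjmx (rdiag k) = rdiag k.
Proof.
apply/matrixP => a b; rewrite adjmxE !rdiagE eq_sym.
by case: eqP => [->|_]; rewrite ?conjc_realR ?conjc0R.
Qed.

Lemma mul_rdiag_mx n p (k : 'I_n -> R) (A : 'M[C]_(n, p)) a b :
  (rdiag k *m A) a b = (k a)%:C * A a b.
Proof. by rewrite mul_diag_mx !mxE. Qed.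

Lemma mul_mx_rdiag p n (k : 'I_n -> R) (A : 'M[C]_(p, n)) a b :
  (A *m rdiag k) a b = A a b * (k b)%:C.
Proof. by rewrite mul_mx_diag !mxE. Qed.

Lemma mulmx_rdiag n (k l : 'I_n -> R) : rdiag k *m rdiag l = rdiag (fun a => k a * l a).
Proof. by rewrite mulmx_diag; congr diag_mx; apply/rowP => a; rewrite !mxE rmorphM. Qed.

Lemma rdiag1 n : rdiag (fun _ : 'I_n => 1) = 1%:M.
Proof. by apply/matrixP => a b; rewrite rdiagE !mxE. Qed.

Lemma mxtrace_rdiag n (k : 'I_n -> R) : \tr (rdiag k) = (\sum_a k a)%:C.
Proof. by rewrite mxtrace_diag rmorph_sum; apply: eq_bigr => a _; rewrite mxE. Qed.

Lemma mxtrace_mulE n (A B : 'M[C]_n) : \tr (A *m B) = \sum_a \sum_b A a b * B b a.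
Proof. by apply: eq_bigr => a _; rewrite mxE. Qed.

Lemma Re_mxtrace_mul_adj n (A : 'M[C]_n) :
  cRe (\tr (A *m adjmx A)) = \sum_a \sum_b cnorm2 (A a b).
Proof.
rewrite mxtrace_mulE cRe_sum; apply: eq_bigr => a _; rewrite cRe_sum.
apply: eq_bigr => b _; rewrite adjmxE /cnorm2.
by case: (A a b) => x y /=; ring.
Qed.

Lemma Re_mxtrace_herm n (M : 'M[C]_n) (k : 'I_n -> R) : adjmx M = M ->
  cRe (\tr (M *m rdiag k *m M)) = \sum_a \sum_b k b * cnorm2 (M a b).
Proof.
move=> M_herm; rewrite mxtrace_mulE cRe_sum; apply: eq_bigr => a _; rewrite cRe_sum.
apply: eq_bigr => b _; rewrite mul_mx_rdiag -{2}M_herm adjmxE /cnorm2.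
by case: (M a b) => x y /=; ring.
Qed.

End Adjoint.

Section ComplexDerivative.
Variables (R : realType) (m : nat).
Implicit Types (g h : 'rV[R]_m -> R[i]) (u t : 'rV[R]_m).

Definition cdifferentiable g t :=
  differentiable (fun s => cRe (g s)) t /\ differentiable (fun s => cIm (g s)) t.

Definition cderive g u t : R[i] :=
  'D_u (fun s => cRe (g s)) t +i* 'D_u (fun s => cIm (g s)) t.

Lemma eq_cderive g h u t : g =1 h -> cderive g u t = cderive h u t.
Proof. by move=> /funext ->. Qed.

Lemma eq_cdifferentiable g h t : g =1 h -> cdifferentiable g t -> cdifferentiable h t.
Proof. by move=> /funext ->. Qed.

Lemma cdifferentiable_cst c t : cdifferentiable (fun=> c) t.
Proof. by split; apply: differentiable_cst. Qed.

Lemma cderive_cst c u t : cderive (fun=> c) u t = 0.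
Proof. by rewrite /cderive !derive_cst. Qed.

Lemma cdifferentiable_real (f : 'rV[R]_m -> R) t :
  differentiable f t -> cdifferentiable (fun s => (f s)%:C) t.
Proof. by split => //=; apply: differentiable_cst. Qed.

Lemma cderive_real (f : 'rV[R]_m -> R) u t :
  cderive (fun s => (f s)%:C) u t = ('D_u f t)%:C.
Proof. by rewrite /cderive /= derive_cst. Qed.

Section Rules.
Variables (g h : 'rV[R]_m -> R[i]) (t : 'rV[R]_m).
Hypotheses (dg : cdifferentiable g t) (dh : cdifferentiable h t).

Let Re_add : (fun s => cRe (g s + h s)) = (fun s => cRe (g s)) + (fun s => cRe (h s)).
Proof. by apply/funext => s; rewrite cReD. Qed.
Let Im_add : (fun s => cIm (g s + h s)) = (fun s => cIm (g s)) + (fun s => cIm (h s)).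
Proof. by apply/funext => s; rewrite cImD. Qed.
Let Re_mul : (fun s => cRe (g s * h s)) =
  (fun s => cRe (g s)) * (fun s => cRe (h s)) - (fun s => cIm (g s)) * (fun s => cIm (h s)).
Proof. by apply/funext => s; rewrite cReM. Qed.
Let Im_mul : (fun s => cIm (g s * h s)) =
  (fun s => cRe (g s)) * (fun s => cIm (h s)) + (fun s => cIm (g s)) * (fun s => cRe (h s)).
Proof. by apply/funext => s; rewrite cImM. Qed.
Let Re_conj : (fun s => cRe (g s)^*) = (fun s => cRe (g s)).
Proof. by apply/funext => s; rewrite cReJ. Qed.
Let Im_conj : (fun s => cIm (g s)^*) = - (fun s => cIm (g s)).
Proof. by apply/funext => s; rewrite cImJ. Qed.

Lemma cdifferentiableD : cdifferentiable (fun s => g s + h s) t.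
Proof.
case: dg dh => g1 g2 [h1 h2]; split.
  by rewrite Re_add; apply: differentiableD.
by rewrite Im_add; apply: differentiableD.
Qed.

Lemma cderiveD u : cderive (fun s => g s + h s) u t = cderive g u t + cderive h u t.
Proof.
case: dg dh => ? ? [? ?]; rewrite /cderive Re_add Im_add.
by rewrite !deriveD //; apply: diff_derivable.
Qed.

Lemma cdifferentiableM : cdifferentiable (fun s => g s * h s) t.
Proof.
case: dg dh => g1 g2 [h1 h2]; split.
  by rewrite Re_mul; apply: differentiableB; apply: differentiableM.
by rewrite Im_mul; apply: differentiableD; apply: differentiableM.
Qed.

Lemma cderiveM u :
  cderive (fun s => g s * h s) u t = cderive g u t * h t + g t * cderive h u t.
Proof.
case: dg dh => /(diff_derivable (v:=u)) g1 /(diff_derivable (v:=u)) g2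
               [/(diff_derivable (v:=u)) h1 /(diff_derivable (v:=u)) h2].
rewrite /cderive Re_mul Im_mul.
rewrite (deriveB (derivableM g1 h1) (derivableM g2 h2)).
rewrite (deriveD (derivableM g1 h2) (derivableM g2 h1)).
rewrite (deriveM g1 h1) (deriveM g2 h2) (deriveM g1 h2) (deriveM g2 h1).
move: ('D_u (fun s => cRe (g s)) t) ('D_u (fun s => cIm (g s)) t) ('D_u (fun s => cRe (h s)) t)
  ('D_u (fun s => cIm (h s)) t) => A B C D.
rewrite /GRing.scale /=; case: (g t) => a b; case: (h t) => c e /=.
by apply/eqP; rewrite eq_complex /=; apply/andP; split; apply/eqP; ring.
Qed.

Lemma cdifferentiableJ : cdifferentiable (fun s => (g s)^*) t.
Proof.
case: dg => g1 g2; split; first by rewrite Re_conj.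
by rewrite Im_conj; apply: differentiableN.
Qed.

Lemma cderiveJ u : cderive (fun s => (g s)^*) u t = (cderive g u t)^*.
Proof.
case: dg => _ /(diff_derivable (v:=u)) ?.
by rewrite /cderive Re_conj Im_conj deriveN.
Qed.

End Rules.

Lemma cdifferentiable_sum I (r : seq I) (g : I -> 'rV[R]_m -> R[i]) t :
  (forall i, cdifferentiable (g i) t) -> cdifferentiable (fun s => \sum_(i <- r) g i s) t.
Proof.
move=> dg; elim: r => [|i r IH].
  apply: (@eq_cdifferentiable (fun=> 0)); last exact: cdifferentiable_cst.
  by move=> s; rewrite big_nil.
apply: (eq_cdifferentiable _ (cdifferentiableD (dg i) IH)).
by move=> s; rewrite big_cons.
Qed.

Lemma cderive_sum I (r : seq I) (g : I -> 'rV[R]_m -> R[i]) u t :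
  (forall i, cdifferentiable (g i) t) ->
  cderive (fun s => \sum_(i <- r) g i s) u t = \sum_(i <- r) cderive (g i) u t.
Proof.
move=> dg; elim: r => [|i r IH].
  by rewrite big_nil -[RHS](cderive_cst 0 u t); apply: eq_cderive => s; rewrite big_nil.
rewrite big_cons -IH -cderiveD //; last exact: cdifferentiable_sum.
by apply: eq_cderive => s; rewrite big_cons.
Qed.

End ComplexDerivative.

Section MatrixDerivative.
Variables (R : realType) (m : nat).
Local Notation C := R[i].

Lemma pderE p q (F : 'rV[R]_m -> 'M[C]_(p, q)) j t a b :
  pder F j t a b = cderive (fun s => F s a b) (ej R j) t.
Proof. by rewrite mxE. Qed.

Lemma mx_differentiable_cst p q (A : 'M[C]_(p, q)) : mx_differentiable (fun _ : 'rV[R]_m => A).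
Proof. by move=> t a b; apply: cdifferentiable_cst. Qed.

Lemma pder_cst p q (A : 'M[C]_(p, q)) j t : pder (fun _ : 'rV[R]_m => A) j t = 0.
Proof. by apply/matrixP => a b; rewrite pderE cderive_cst mxE. Qed.

Section Rules.
Variables (p q r : nat) (F : 'rV[R]_m -> 'M[C]_(p, q)) (G : 'rV[R]_m -> 'M[C]_(q, r)).
Hypotheses (dF : mx_differentiable F) (dG : mx_differentiable G).

Let entry_mul a b : (fun s => \sum_c F s a c * G s c b) =1 (fun s => (F s *m G s) a b).
Proof. by move=> s; rewrite mxE. Qed.

Lemma mx_differentiable_mul : mx_differentiable (fun s => F s *m G s).
Proof.
move=> t a b; apply: eq_cdifferentiable (entry_mul a b) _.
by apply: cdifferentiable_sum => c; apply: cdifferentiableM.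
Qed.

Lemma pder_mul j t : pder (fun s => F s *m G s) j t = pder F j t *m G t + F t *m pder G j t.
Proof.
apply/matrixP => a b; rewrite pderE -(eq_cderive _ _ (entry_mul a b)).
rewrite cderive_sum => [|c]; last exact: cdifferentiableM.
by rewrite !mxE -big_split; apply: eq_bigr => c _; rewrite cderiveM // !pderE.
Qed.

End Rules.

Lemma mx_differentiable_adj p q (F : 'rV[R]_m -> 'M[C]_(p, q)) :
  mx_differentiable F -> mx_differentiable (fun s => adjmx (F s)).
Proof.
move=> dF t a b; apply: (@eq_cdifferentiable _ _ (fun s => (F s b a)^*)).
  by move=> s; rewrite !mxE.
exact: cdifferentiableJ.
Qed.

Lemma pder_adj p q (F : 'rV[R]_m -> 'M[C]_(p, q)) j t : mx_differentiable F ->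
  pder (fun s => adjmx (F s)) j t = adjmx (pder F j t).
Proof.
move=> dF; apply/matrixP => a b.
rewrite pderE (@eq_cderive _ _ _ (fun s => (F s b a)^*)) => [|s]; last by rewrite !mxE.
by rewrite cderiveJ // !mxE.
Qed.

Lemma pder_rdiag n (k : 'I_n -> 'rV[R]_m -> R) j t :
  pder (fun s => rdiag (k ^~ s)) j t = rdiag (fun a => 'D_(ej R j) (k a) t).
Proof.
apply/matrixP => a b; rewrite pderE rdiagE.
have [<-|ne] := eqVneq a b.
  rewrite mulr1n -cderive_real; apply: eq_cderive => s.
  by rewrite rdiagE eqxx mulr1n.
rewrite mulr0n -(cderive_cst 0 (ej R j) t); apply: eq_cderive => s.
by rewrite rdiagE (negPf ne) mulr0n.
Qed.

End MatrixDerivative.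

Lemma partials_eq0_constant (R : realType) (m : nat) (f : 'rV[R]_m -> R) :
  (forall t, differentiable f t) -> (forall j t, 'D_(ej R j) f t = 0) ->
  forall t t', f t = f t'.
Proof.
move=> df D0 t t'.
have d0 x : 'd f x = (fun=> 0) :> ('rV[R]_m -> R).
  apply/funext => v; rewrite (row_sum_delta v) linear_sum big1 // => j _.
  by rewrite linearZ /= -deriveE // D0 scaler0.
pose line (r : R) := r *: (t' - t) + t.
have dline r : differentiable line r.
  by apply: differentiableD; [apply: differentiableZl | exact: differentiable_cst].
pose phi := f \o line.
have dphi r : differentiable phi r by apply: differentiable_comp.
have phi' r : is_derive r (1 : R) phi 0.
  have := derivableP (@diff_derivable _ _ _ phi r (1 : R) (dphi r)).
  by rewrite deriveE // diff_comp // d0.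
have cphi : continuous phi by move=> x; exact: differentiable_continuous.
have [c _] := MVT ltr01 (fun x _ => phi' x) (continuous_subspaceT cphi).
rewrite mul0r => /eqP; rewrite subr_eq0 => /eqP.
by rewrite /phi /line /= scale0r add0r scale1r subrK => ->.
Qed.

(* [V] stands for the matrix of output vectors in polar form, [D] for its partial
   derivative and [L] for the SLD; both sides of [sld_pair D L] are ∂ρ_out. *)
Section UnitaryFrame.
Variables (R : realType) (d : nat) (W : 'M[R[i]]_d) (s : 'I_d -> R).
Hypothesis W_unitary : adjmx W *m W = 1%:M.
Local Notation C := R[i].
Local Notation S := (rdiag s).
Local Notation V := (W *m S).
Local Notation rho := (V *m adjmx V).

Let W_cancel p (B : 'M[C]_(d, p)) : adjmx W *m (W *m B) = B.
Proof. by rewrite mulmxA W_unitary mul1mx. Qed.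

Let W_cancelC p (B : 'M[C]_(d, p)) : W *m (adjmx W *m B) = B.
Proof. by rewrite mulmxA mulmx1C // mul1mx. Qed.

Let adjV : adjmx V = S *m adjmx W.
Proof. by rewrite adjmxM adjmx_rdiag. Qed.

Definition frameY (D : 'M[C]_d) := adjmx W *m D.
Definition frameM (L : 'M[C]_d) := adjmx W *m L *m W.

Definition sld_pair (D L : 'M[C]_d) :=
  D *m adjmx V + V *m adjmx D = (2^-1 : C) *: (rho *m L + L *m rho).

Lemma sld_pair_frame D L : sld_pair D L -> forall a b,
  (s a ^+ 2 + s b ^+ 2)%:C * frameM L a b
  = 2 * (frameY D a b * (s b)%:C + (s a)%:C * conjc (frameY D b a)).
Proof.
move=> hsld a b.
have lhs : adjmx W *m (D *m adjmx V + V *m adjmx D) *m W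
           = frameY D *m S + S *m adjmx (frameY D).
  rewrite adjV /frameY adjmxM adjmxK mulmxDr mulmxDl -!mulmxA !W_cancel.
  by rewrite W_unitary mulmx1.
have rhs : adjmx W *m ((2^-1 : C) *: (rho *m L + L *m rho)) *m W
           = (2^-1 : C) *: (S *m (S *m frameM L) + frameM L *m S *m S).
  rewrite adjV /frameM -scalemxAr -scalemxAl mulmxDr mulmxDl -!mulmxA !W_cancel.
  by rewrite W_unitary mulmx1.
move: lhs; rewrite hsld rhs /rdiag !mul_mx_diag !mul_diag_mx => /matrixP/(_ a b).
rewrite !mxE => <-.
by rewrite mulrA mulfV ?pnatr_eq0 // mul1r rmorphD !rmorphXn /=; ring.
Qed.

Lemma orth_frame D a b : (adjmx D *m V + adjmx V *m D) a b
  = conjc (frameY D b a) * (s b)%:C + (s a)%:C * frameY D a b.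
Proof.
rewrite adjV mxE mulmxA -[adjmx D *m W]adjmxK adjmxM adjmxK -mulmxA.
by rewrite mul_mx_rdiag mul_rdiag_mx adjmxE.
Qed.

Lemma mxtrace_frameY D1 D2 : \tr (D1 *m adjmx D2) = \tr (frameY D1 *m adjmx (frameY D2)).
Proof. by rewrite /frameY adjmxM adjmxK mulmxA [RHS]mxtrace_mulC -!mulmxA W_cancelC. Qed.

Lemma mxtrace_frameM L1 L2 :
  \tr (L1 *m rho *m L2) = \tr (frameM L1 *m (S *m S) *m frameM L2).
Proof.
have -> : frameM L1 *m (S *m S) *m frameM L2 = adjmx W *m (L1 *m rho *m L2) *m W.
  by rewrite adjV /frameM !mulmxA.
by rewrite [RHS]mxtrace_mulC W_cancelC.
Qed.

Lemma frameM_herm L : adjmx L = L -> adjmx (frameM L) = frameM L.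
Proof. by move=> L_herm; rewrite /frameM !adjmxM adjmxK L_herm mulmxA. Qed.

Lemma frameY_rdiag D k : D = V *m rdiag k -> frameY D = rdiag (fun a => s a * k a).
Proof. by move=> ->; rewrite /frameY mulmxA W_cancel mulmx_rdiag. Qed.

Lemma fisher_gap_sum D L : adjmx L = L ->
  4 * cRe (\tr (D *m adjmx D)) - cRe (\tr (L *m rho *m L))
  = \sum_a \sum_b (4 * cnorm2 (frameY D a b) - s b ^+ 2 * cnorm2 (frameM L a b)).
Proof.
move=> L_herm; rewrite mxtrace_frameY mxtrace_frameM mulmx_rdiag Re_mxtrace_mul_adj.
rewrite Re_mxtrace_herm ?frameM_herm // mulr_sumr -sumrB.
apply: eq_bigr => a _; rewrite mulr_sumr -sumrB.
by apply: eq_bigr => b _; rewrite expr2.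
Qed.

Lemma rdiag_of_frameY D k : frameY D = rdiag (fun a => s a * k a) -> D = V *m rdiag k.
Proof. by move=> hY; rewrite -mulmxA mulmx_rdiag -hY W_cancelC. Qed.

Hypothesis s_gt0 : forall a, 0 < s a.

Lemma frameY_real_diag_of_fisher_eq D L : adjmx L = L -> sld_pair D L ->
  (forall a b, a != b -> (adjmx D *m V + adjmx V *m D) a b = 0) ->
  4 * cRe (\tr (D *m adjmx D)) = cRe (\tr (L *m rho *m L)) ->
  frameY D = rdiag (fun a => cRe (frameY D a a)).
Proof.
move=> L_herm hsld horth heq.
pose gap a b := 4 * cnorm2 (frameY D a b) - s b ^+ 2 * cnorm2 (frameM L a b).
have gap_diag a : gap a a = 4 * cIm (frameY D a a) ^+ 2.
  exact: fisher_gap_diag (s_gt0 a) (sld_pair_frame hsld a a).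
pose c a b := 16 * s a ^+ 2 * s b ^+ 2 / (s a ^+ 2 + s b ^+ 2) ^+ 2.
have c_gt0 a b : 0 < c a b.
  have sa2 : 0 < s a ^+ 2 := exprn_gt0 2 (s_gt0 a).
  have sb2 : 0 < s b ^+ 2 := exprn_gt0 2 (s_gt0 b).
  apply: divr_gt0; last exact: exprn_gt0 (addr_gt0 sa2 sb2).
  by apply: mulr_gt0 sb2; apply: mulr_gt0 sa2; lra.
have gap_off a b : a != b -> gap a b = c a b * cnorm2 (frameY D a b).
  move=> ne; rewrite mulrAC; apply: fisher_gap_offdiag (s_gt0 a) (s_gt0 b) _ (sld_pair_frame hsld a b).
  by rewrite -orth_frame horth.
have gap_ge0 a b : 0 <= gap a b.
  have [<-|ne] := eqVneq a b; first by rewrite gap_diag mulr_ge0 ?sqr_ge0.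
  by rewrite gap_off // mulr_ge0 ?cnorm2_ge0 // ltW.
have gap0 a b : gap a b = 0.
  have /eqP : \sum_a \sum_b gap a b = 0 by rewrite -fisher_gap_sum // heq subrr.
  rewrite psumr_eq0 => [/allP/(_ a (mem_index_enum _))|a' _]; last exact: sumr_ge0.
  by rewrite implyTb psumr_eq0 // => /allP/(_ b (mem_index_enum _)) /eqP.
apply/matrixP => a b; rewrite rdiagE.
have [<-|ne] := eqVneq a b.
  move: (gap0 a a); rewrite gap_diag mulr1n; case: (frameY D a a) => x y /= h.
  by have -> : y = 0 by nra.
rewrite mulr0n; apply: cnorm2_eq0.
by move: (gap0 a b); rewrite gap_off // => /eqP; rewrite mulf_eq0 gt_eqF //= => /eqP.
Qed.

Lemma rdiag_of_fisher_eq D L : adjmx L = L -> sld_pair D L ->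
  (forall a b, a != b -> (adjmx D *m V + adjmx V *m D) a b = 0) ->
  4 * cRe (\tr (D *m adjmx D)) = cRe (\tr (L *m rho *m L)) ->
  exists k, D = V *m rdiag k.
Proof.
move=> L_herm hsld horth heq; exists (fun a => cRe (frameY D a a) / s a).
apply: rdiag_of_frameY; rewrite {1}(frameY_real_diag_of_fisher_eq L_herm hsld horth heq).
by congr rdiag; apply/funext => a; rewrite mulrC divfK // gt_eqF.
Qed.

Lemma frameM_rdiag D L k : sld_pair D L -> D = V *m rdiag k ->
  frameM L = rdiag (fun a => 2 * k a).
Proof.
move=> hsld /frameY_rdiag hY; apply/matrixP => a b.
have Q_neq0 : (s a ^+ 2 + s b ^+ 2)%:C != 0 :> C.
  by apply/eqP => -[] /eqP; rewrite gt_eqF // addr_gt0 // exprn_gt0.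
apply: (mulfI Q_neq0); rewrite (sld_pair_frame hsld) !hY !rdiagE eq_sym.
case: eqVneq => [<- | _]; last by rewrite !mulr0n conjc0R !(mul0r, mulr0, addr0).
by rewrite !mulr1n conjc_realR complex2 -!rmorphM -rmorphD -rmorphM; congr _%:C; ring.
Qed.

Lemma fisher_eq_of_rdiag D1 L1 D2 L2 k1 k2 : sld_pair D1 L1 -> sld_pair D2 L2 ->
  D1 = V *m rdiag k1 -> D2 = V *m rdiag k2 ->
  4 * cRe (\tr (D1 *m adjmx D2)) = cRe (\tr (L1 *m rho *m L2)).
Proof.
move=> h1 h2 e1 e2.
rewrite mxtrace_frameY mxtrace_frameM (frameY_rdiag e1) (frameY_rdiag e2).
rewrite (frameM_rdiag h1 e1) (frameM_rdiag h2 e2) adjmx_rdiag !mulmx_rdiag !mxtrace_rdiag /=.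
by rewrite mulr_sumr; apply: eq_bigr => a _; ring.
Qed.

End UnitaryFrame.

Section OutputVectors.
Variables (R : realType) (m d : nat) (psi0 : 'cV[R[i]]_d)
  (Ups : 'I_d -> 'rV[R]_m -> 'M[R[i]]_d).
Local Notation C := R[i].
Local Notation p := (pk Ups psi0).

Definition mx_of_cols n (f : 'I_n -> 'cV[C]_d) : 'M[C]_(d, n) := \matrix_(a, b) f b a 0.

Lemma mulmx_cols_adj n (f g : 'I_n -> 'cV[C]_d) :
  mx_of_cols f *m adjmx (mx_of_cols g) = \sum_k f k *m adjmx (g k).
Proof.
apply/matrixP => a b; rewrite summxE !mxE; apply: eq_bigr => k _.
by rewrite !mxE big_ord1 !mxE.
Qed.

Lemma mulmx_pure_state (A B : 'M[C]_d) :
  A *m pure_state psi0 *m adjmx B = (A *m psi0) *m adjmx (B *m psi0).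
Proof. by rewrite /pure_state adjmxM !mulmxA. Qed.

Definition Vout t := mx_of_cols (fun b => Ups b t *m psi0).

Lemma rho_out_Vout t : rho_out Ups psi0 t = Vout t *m adjmx (Vout t).
Proof. by rewrite mulmx_cols_adj; apply: eq_bigr => k _; rewrite mulmx_pure_state. Qed.

Hypothesis Ups_diff : forall k, mx_differentiable (Ups k).

Lemma Vout_differentiable : mx_differentiable Vout.
Proof.
move=> t a b; apply: (@eq_cdifferentiable _ _ (fun s => (Ups b s *m psi0) a 0)).
  by move=> s; rewrite [RHS]mxE.
exact: (mx_differentiable_mul (Ups_diff b) (mx_differentiable_cst psi0)).
Qed.

Lemma pder_Vout j t : pder Vout j t = mx_of_cols (fun b => pder (Ups b) j t *m psi0).
Proof.
apply/matrixP => a b; rewrite [RHS]mxE pderE.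
rewrite (@eq_cderive _ _ _ (fun s => (Ups b s *m psi0) a 0)); last by move=> s; rewrite [LHS]mxE.
rewrite -(pderE (fun s => Ups b s *m psi0)) pder_mul ?pder_cst ?mulmx0 ?addr0 //.
Qed.

Lemma pder_rho_out j t : pder (rho_out Ups psi0) j t
  = pder Vout j t *m adjmx (Vout t) + Vout t *m adjmx (pder Vout j t).
Proof.
have -> : rho_out Ups psi0 = fun s => Vout s *m adjmx (Vout s).
  by apply/funext => s; rewrite rho_out_Vout.
rewrite pder_mul ?pder_adj //; [exact: Vout_differentiable | exact: Vout_differentiable |].
exact: mx_differentiable_adj Vout_differentiable.
Qed.

Lemma C_Ups_Vout j k t : C_Ups Ups psi0 t j k
  = 4 * cRe (\tr (pder Vout j t *m adjmx (pder Vout k t))).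
Proof.
rewrite mxE !pder_Vout mulmx_cols_adj (raddf_sum (@mxtrace C d)) cRe_sum.
by congr (4 * _); apply: eq_bigr => l _; rewrite mulmx_pure_state.
Qed.

Lemma H_SLD_Vout lam j k t : H_SLD Ups psi0 lam t j k
  = cRe (\tr (lam j t *m (Vout t *m adjmx (Vout t)) *m lam k t)).
Proof. by rewrite mxE rho_out_Vout. Qed.

Hypothesis Ups_orth : forall t (j k : 'I_d),
  \tr (Ups k t *m pure_state psi0 *m adjmx (Ups j t)) = (j == k)%:R * (p k t)%:C.

Lemma Vout_gram t : adjmx (Vout t) *m Vout t = rdiag (p ^~ t).
Proof.
apply/matrixP => a b; rewrite rdiagE.
have -> : (p a t)%:C *+ (a == b) = (a == b)%:R * (p b t)%:C.
  by rewrite mulr_natl; case: eqP => [->|].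
rewrite -Ups_orth mulmx_pure_state.
rewrite mxtrace_mulC /mxtrace big_ord1 !mxE; apply: eq_bigr => c _.
by rewrite !mxE mulrC.
Qed.

Lemma pder_Vout_gram j t :
  adjmx (pder Vout j t) *m Vout t + adjmx (Vout t) *m pder Vout j t
  = rdiag (fun b => 'D_(ej R j) (p b) t).
Proof.
have := pder_mul (mx_differentiable_adj Vout_differentiable) Vout_differentiable j t.
rewrite pder_adj; last exact: Vout_differentiable.
move=> <-; rewrite -pder_rdiag; congr pder; apply/funext => s; exact: Vout_gram.
Qed.

Lemma pk_differentiable b t : differentiable (p b) t.
Proof.
have -> : p b = fun s => cRe ((adjmx (Vout s) *m Vout s) b b).
  by apply/funext => s; rewrite Vout_gram rdiagE eqxx mulr1n.
have dgram := mx_differentiable_mul (mx_differentiable_adj Vout_differentiable) Vout_differentiable.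
exact: (dgram t b b).1.
Qed.

Lemma derive_pk_rdiag j t k : pder Vout j t = Vout t *m rdiag k ->
  forall b, 'D_(ej R j) (p b) t = 2 * k b * p b t.
Proof.
move=> hk b; have /matrixP/(_ b b) := pder_Vout_gram j t.
rewrite hk adjmxM adjmx_rdiag -mulmxA Vout_gram mulmxA Vout_gram !mulmx_rdiag.
rewrite [LHS]mxE !rdiagE eqxx !mulr1n -rmorphD => -[<-]; ring.
Qed.

Hypothesis p_gt0 : forall b t, 0 < p b t.

Definition sigma b t := Num.sqrt (p b t).

Lemma sigma_gt0 t b : 0 < sigma b t.
Proof. by rewrite sqrtr_gt0. Qed.

Lemma sigma_differentiable b t : differentiable (sigma b) t.
Proof.
apply: (@differentiable_comp _ _ _ _ (p b) Num.sqrt); first exact: pk_differentiable.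
by apply/derivable1_diffP; case: (is_derive1_sqrt (p_gt0 b t)).
Qed.

Lemma derive_inv_sigma j t b k : 'D_(ej R j) (p b) t = 2 * k * p b t ->
  'D_(ej R j) (fun s => (sigma b s)^-1) t = - k * (sigma b t)^-1.
Proof.
move=> dp; have sigma_neq0 : sigma b t != 0 by rewrite gt_eqF // sigma_gt0.
have dsigma := diff_derivable (v := ej R j) (sigma_differentiable b t).
have sigma_sq s : sigma b s ^+ 2 = p b s by rewrite sqr_sqrtr // ltW.
have dsigma_k : 'D_(ej R j) (sigma b) t = k * sigma b t.
  have := deriveM dsigma dsigma.
  have -> : sigma b * sigma b = p b by apply/funext => s; rewrite -sigma_sq expr2.
  rewrite dp -sigma_sq /GRing.scale /= => h.
  by apply: (mulfI sigma_neq0); lra.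
by rewrite deriveV // dsigma_k /GRing.scale /=; field.
Qed.

Definition Wout t := Vout t *m rdiag (fun b => (sigma b t)^-1).

Lemma Vout_frame t : Vout t = Wout t *m rdiag (sigma ^~ t).
Proof.
rewrite -mulmxA mulmx_rdiag (_ : rdiag _ = 1%:M) ?mulmx1 //.
by rewrite -rdiag1; congr rdiag; apply/funext => b; rewrite mulVf // gt_eqF // sigma_gt0.
Qed.

Lemma Wout_unitary t : adjmx (Wout t) *m Wout t = 1%:M.
Proof.
rewrite adjmxM adjmx_rdiag -mulmxA (mulmxA (adjmx _)) Vout_gram !mulmx_rdiag -rdiag1.
congr rdiag; apply/funext => b; have := sigma_gt0 t b.
by rewrite -[p b t](sqr_sqrtr (ltW (p_gt0 b t))) -/(sigma b t) => ?; field; rewrite gt_eqF.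
Qed.

Lemma wk_entry b t a : wk Ups psi0 b t a 0 = ((sigma b t)^-1)%:C * Vout t a b.
Proof. by rewrite /wk !mxE. Qed.

Lemma quasi_classical_of_rdiag_pder :
  (forall j t, exists k, pder Vout j t = Vout t *m rdiag k) -> quasi_classical Ups psi0.
Proof.
move=> hD b t t'; apply/matrixP => a c; rewrite (ord1 c) !wk_entry.
pose g s := ((sigma b s)^-1)%:C * Vout s a b.
have dinv s : differentiable (fun x => (sigma b x)^-1) s.
  by apply: differentiableV; [exact: sigma_differentiable | rewrite gt_eqF // sigma_gt0].
have dg s : cdifferentiable g s.
  by apply: cdifferentiableM; [exact: cdifferentiable_real | exact: Vout_differentiable].
have g'0 j s : cderive g (ej R j) s = 0.
  have [k hk] := hD j s.
  rewrite cderiveM; [|exact: cdifferentiable_real | exact: Vout_differentiable].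
  rewrite cderive_real -pderE hk mul_mx_rdiag (derive_inv_sigma (derive_pk_rdiag hk b)).
  by rewrite rmorphM rmorphN /=; ring.
have Re_const := partials_eq0_constant (fun x => (dg x).1) (fun j x => congr1 (fun z => cRe z) (g'0 j x)) t t'.
have Im_const := partials_eq0_constant (fun x => (dg x).2) (fun j x => congr1 (fun z => cIm z) (g'0 j x)) t t'.
change (g t = g t'); apply/eqP; rewrite eq_complex.
by move: Re_const Im_const => /= -> ->; rewrite !eqxx.
Qed.

Lemma rdiag_pder_of_quasi_classical : quasi_classical Ups psi0 ->
  forall j t, exists k, pder Vout j t = Vout t *m rdiag k.
Proof.
move=> qc j t; exists (fun b => 'D_(ej R j) (sigma b) t / sigma b t).
apply/matrixP => a b; rewrite mul_mx_rdiag pderE.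
rewrite (@eq_cderive _ _ _ (fun s => (sigma b s)%:C * wk Ups psi0 b t a 0)); last first.
  move=> s; rewrite -(qc b s t) wk_entry mulrA -rmorphM mulfV ?mul1r //.
  by rewrite gt_eqF // sigma_gt0.
rewrite cderiveM; [|exact: cdifferentiable_real (sigma_differentiable b t)|exact: cdifferentiable_cst].
by rewrite cderive_real cderive_cst mulr0 addr0 wk_entry !rmorphM /=; ring.
Qed.

Variable lam : 'I_m -> 'rV[R]_m -> 'M[C]_d.
Hypothesis lam_sld : is_SLD Ups psi0 lam.

Lemma sld_pair_Vout j t : sld_pair (Wout t) (sigma ^~ t) (pder Vout j t) (lam j t).
Proof.
rewrite /sld_pair -Vout_frame -pder_rho_out -rho_out_Vout.
by have [_ ->] := lam_sld j t.
Qed.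

Lemma H_SLD_eq_C_Ups_iff_rdiag_pder t : H_SLD Ups psi0 lam t = C_Ups Ups psi0 t <->
  forall j, exists k, pder Vout j t = Vout t *m rdiag k.
Proof.
have frame := Vout_frame t; have W_unit := Wout_unitary t.
split => [HC j | hD].
  have hj : 4 * cRe (\tr (pder Vout j t *m adjmx (pder Vout j t)))
            = cRe (\tr (lam j t *m (Vout t *m adjmx (Vout t)) *m lam j t)).
    by rewrite -C_Ups_Vout -H_SLD_Vout HC.
  have orth a b : a != b ->
      (adjmx (pder Vout j t) *m Vout t + adjmx (Vout t) *m pder Vout j t) a b = 0.
    by move=> ne; rewrite pder_Vout_gram rdiagE (negPf ne) mulr0n.
  rewrite frame in hj orth *.
  exact: (rdiag_of_fisher_eq (D := pder Vout j t) W_unit (sigma_gt0 t) (lam_sld j t).1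
           (sld_pair_Vout j t) orth hj).
apply/matrixP => j k; rewrite H_SLD_Vout C_Ups_Vout.
have [k1 e1] := hD j; have [k2 e2] := hD k; rewrite frame in e1 e2 *.
by rewrite (fisher_eq_of_rdiag W_unit (sigma_gt0 t) (sld_pair_Vout j t) (sld_pair_Vout k t) e1 e2).
Qed.

End OutputVectors.

Theorem lemma9 (R : realType) (m d : nat)
  (n : nat) (E : 'I_n -> 'rV[R]_m -> 'M[R[i]]_d)
  (psi0 : 'cV[R[i]]_d)
  (Ups : 'I_d -> 'rV[R]_m -> 'M[R[i]]_d)
  (lam : 'I_m -> 'rV[R]_m -> 'M[R[i]]_d) :
  (forall k, mx_differentiable (E k)) ->
  (forall theta, \sum_(k < n) adjmx (E k theta) *m E k theta = 1%:M) ->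
  adjmx psi0 *m psi0 = 1%:M ->
  (forall k, mx_differentiable (Ups k)) ->
  (forall theta (rho : 'M[R[i]]_d),
      \sum_(k < n) E k theta *m rho *m adjmx (E k theta)
      = \sum_(k < d) Ups k theta *m rho *m adjmx (Ups k theta)) ->
  (forall theta (j k : 'I_d),
      \tr (Ups k theta *m pure_state psi0 *m adjmx (Ups j theta))
      = (j == k)%:R * (pk Ups psi0 k theta)%:C) ->
  (forall (j : 'I_d) theta, 0 < pk Ups psi0 j theta) ->
  is_SLD Ups psi0 lam ->
  ((forall theta, H_SLD Ups psi0 lam theta = C_Ups Ups psi0 theta)
   <-> quasi_classical Ups psi0).
Proof.
(* Only the canonical Kraus operators enter; the channel's own ones are unused. *)
move=> _ _ _ Ups_diff _ Ups_orth p_gt0 lam_sld.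
split => [HC | qc t].
  apply: quasi_classical_of_rdiag_pder => // j t.
  exact: (H_SLD_eq_C_Ups_iff_rdiag_pder Ups_diff Ups_orth p_gt0 lam_sld t).1 (HC t) j.
apply/(H_SLD_eq_C_Ups_iff_rdiag_pder Ups_diff Ups_orth p_gt0 lam_sld t) => j.
exact: rdiag_pder_of_quasi_classical.
Qed.
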